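(* Let $0<q<1$, let $r\ge1$, $s\ge1$ be integers with $r-1\le s$, and $\alpha\in\mathbb{R}\setminus\mathbb{Z}_-$. Let $a_j>0$ real and $b_j\in\mathbb{C}$ ($j=1,\dots,r-1$), and $c_\ell>0$ real and $d_\ell\in\mathbb{C}$ ($\ell=1,\dots,s-1$), with $a_jn+\mathrm{Re}(b_j)\notin\mathbb{Z}_-$ and $c_\ell n+\mathrm{Re}(d_\ell)\notin\mathbb{Z}_-$ for all positive integers $n$ (when $r=1$ there are no $a_j,b_j$; when $s=1$ there are no $c_\ell,d_\ell$). Then for every $z\in\mathbb{C}$, $$\lim_{n\to+\infty}{}_r\phi_s\!\left(\begin{array}{c}q^{-n},q^{a_1n+b_1},\dots,q^{a_{r-1}n+b_{r-1}}\\ q^{\alpha},q^{c_1n+d_1},\dots,q^{c_{s-1}n+d_{s-1}}\end{array};q,q^nz\right)=\sum_{k=0}^{\infty}\frac{(-1)^{(r-s)k}q^{(2+s-r)\binom k2}}{(q^{\alpha};q)_k(q;q)_k}z^k.$$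
   Context: $\mathbb{Z}_-=\{0,-1,-2,\dots\}$. For $w\in\mathbb{C}$, $q^{w}:=e^{w\ln q}$. For $a\in\mathbb{C}$: $(a;q)_0=1$, $(a;q)_k=\prod_{j=0}^{k-1}(1-aq^{j})$, and $(a_1,\dots,a_r;q)_k=\prod_{i=1}^r(a_i;q)_k$. The basic hypergeometric series is $${}_r\phi_s\!\left(\begin{array}{c}a_1,\dots,a_r\\ b_1,\dots,b_s\end{array};q,z\right)=\sum_{k=0}^{\infty}\frac{(a_1,\dots,a_r;q)_k}{(b_1,\dots,b_s;q)_k}(-1)^{(1+s-r)k}q^{(1+s-r)\binom{k}{2}}\frac{z^k}{(q;q)_k};$$ when one numerator parameter is $q^{-n}$ it is a polynomial in $z$ of degree at most $n$. *)

From Stdlib Require Import Reals.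
From Coquelicot Require Import Coquelicot.
Open Scope R_scope.

(* q^w := exp(w ln q) for complex w, written out: exp(Re w ln q)(cos(Im w ln q) + i sin(Im w ln q)) *)
Definition qpow (q : R) (w : C) : C :=
  (exp (Re w * ln q) * cos (Im w * ln q), exp (Re w * ln q) * sin (Im w * ln q)).

Fixpoint cpow (x : C) (k : nat) : C :=
  match k with O => RtoC 1 | S k' => Cmult (cpow x k') x end.

Fixpoint qpoch (q : R) (a : C) (k : nat) : C :=
  match k with
  | O => RtoC 1
  | S k' => Cmult (qpoch q a k') (Cminus (RtoC 1) (Cmult a (RtoC (q ^ k'))))
  end.

Fixpoint cprod (f : nat -> C) (m : nat) : C :=
  match m with O => RtoC 1 | S m' => Cmult (cprod f m') (f m') end.

Fixpoint csum (f : nat -> C) (N : nat) : C :=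
  match N with O => f O | S N' => Cplus (csum f N') (f N) end.

Definition binom2 (k : nat) : nat := (k * (k - 1) / 2)%nat.

(* k-th term of r phi s with numerator params A 0..A (r-1), denominator params
   B 0..B (s-1) (given as functions, only the first r resp. s values used). *)
Definition phi_term (q : R) (r s : nat) (A B : nat -> C) (z : C) (k : nat) : C :=
  Cmult
    (Cdiv (cprod (fun i => qpoch q (A i) k) r)
          (Cmult (cprod (fun i => qpoch q (B i) k) s) (qpoch q (RtoC q) k)))
    (Cmult (RtoC (powerRZ (-1) ((1 + Z.of_nat s - Z.of_nat r) * Z.of_nat k)%Z
                  * powerRZ q ((1 + Z.of_nat s - Z.of_nat r) * Z.of_nat (binom2 k))%Z))
           (cpow z k)).

(* Terminating series: when one numerator parameter is q^{-N}, all terms with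
   k > N vanish, so r phi s equals the finite sum of its terms for k = 0..N. *)
Definition phi_terminating (q : R) (r s : nat) (A B : nat -> C) (z : C) (N : nat) : C :=
  csum (phi_term q r s A B z) N.

Definition Zm_ (x : R) : Prop := exists m : nat, x = - INR m.

Definition limit_term (q : R) (r s : nat) (alpha : R) (z : C) (k : nat) : C :=
  Cmult
    (Cdiv (RtoC (powerRZ (-1) ((Z.of_nat r - Z.of_nat s) * Z.of_nat k)%Z
                 * powerRZ q ((2 + Z.of_nat s - Z.of_nat r) * Z.of_nat (binom2 k))%Z))
          (Cmult (qpoch q (qpow q (RtoC alpha)) k) (qpoch q (RtoC q) k)))
    (cpow z k).

From Stdlib Require Import Reals Lra Lia.
From Coquelicot Require Import Coquelicot.
Open Scope R_scope.

(* After the substitution z -> q^n z, the k-th term of the terminating series factors as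
     (q^-n;q)_k q^(nk) * prod_j (q^(a_j n + b_j);q)_k / prod_l (q^(c_l n + d_l);q)_k * w_k
   with w_k independent of n.  As n -> oo, (q^-n;q)_k q^(nk) = prod_(i<k) (q^n - q^i) tends
   to (-1)^k q^(k(k-1)/2) and both products tend to 1, so the terms converge to those of the
   limit series.  Moreover |prod_(i<k) (q^n - q^i)| <= q^(k(k-1)/2), and q-Pochhammer symbols
   whose parameter is small are bounded above and away from 0 uniformly in k, so the terms are
   dominated by C q^(k(k-1)/2) (|z|+1)^k, which is summable.  Tannery's theorem concludes. *)

(** * Tannery's theorem *)

Section Tannery.

Context {K : AbsRing} {V : NormedModule K}.

Lemma filterlim_sum_n (f : nat -> nat -> V) (g : nat -> V) (m : nat) :
  (forall k, filterlim (fun n => f n k) eventually (locally (g k))) ->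
  filterlim (fun n => sum_n (f n) m) eventually (locally (sum_n g m)).
Proof.
  intros Hf. induction m as [|m IH].
  - rewrite sum_O. apply filterlim_ext with (fun n => f n O).
    + intros n. now rewrite sum_O.
    + apply Hf.
  - rewrite sum_Sn. apply filterlim_ext with (fun n => plus (sum_n (f n) m) (f n (S m))).
    + intros n. now rewrite sum_Sn.
    + exact (filterlim_comp_2 _ _ _ IH (Hf (S m)) (filterlim_plus _ _)).
Qed.

Lemma norm_limit_le (f : nat -> nat -> V) (g : nat -> V) (M : nat -> R) :
  (forall k, filterlim (fun n => f n k) eventually (locally (g k))) ->
  eventually (fun n => forall k, norm (f n k) <= M k) ->
  forall k, norm (g k) <= M k.
Proof.
  intros Hf HM k.
  exact (filterlim_le _ _ (norm (g k)) (M k) (filter_imp _ _ (fun n Hn => Hn k) HM)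
           (@filterlim_comp _ _ _ _ _ _ _ _ (Hf k) (filterlim_norm _)) (filterlim_const _)).
Qed.

Lemma tannery_null (h : nat -> nat -> V) (M : nat -> R) :
  (forall k, filterlim (fun n => h n k) eventually (locally (zero : V))) ->
  eventually (fun n => forall k, norm (h n k) <= M k) -> ex_series M ->
  filterlim (fun n => sum_n (h n) n) eventually (locally (zero : V)).
Proof.
  intros Hh HM HexM.
  apply filterlim_norm_zero.
  change (is_lim_seq (fun n => norm (sum_n (h n) n)) 0).
  apply is_lim_seq_spec. intros eps.
  destruct (Cauchy_ex_series M HexM (pos_div_2 eps)) as [N Htail].
  assert (Hhead : is_lim_seq (fun n => norm (sum_n (h n) N)) 0).
  { rewrite <- (@norm_zero K V), <- (sum_n_m_const_zero 0 N).
    exact (@filterlim_comp _ _ _ _ _ _ _ _ (filterlim_sum_n h _ N Hh) (filterlim_norm _)). }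
  apply is_lim_seq_spec in Hhead.
  generalize (filter_and _ _ HM (filter_and _ _ (Hhead (pos_div_2 eps))
                                   (ex_intro _ (S N) (fun n Hn => Hn)))).
  apply filter_imp. intros n [Hbound [Hsmall HnN]]. simpl in Hsmall |- *.
  rewrite Rminus_0_r in Hsmall |- *. rewrite Rabs_pos_eq in Hsmall |- * by apply norm_ge_0.
  unfold sum_n in Hsmall |- *.
  rewrite (sum_n_m_Chasles _ 0 N n) by lia.
  eapply Rle_lt_trans; [apply norm_triangle|].
  assert (Hrest : norm (sum_n_m (h n) (S N) n) < eps / 2).
  { eapply Rle_lt_trans; [apply norm_sum_n_m|].
    eapply Rle_lt_trans; [apply sum_n_m_le, Hbound|].
    eapply Rle_lt_trans; [apply Rle_abs|]. apply Htail; lia. }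
  lra.
Qed.

Lemma filterlim_sum_n_dominated (f : nat -> nat -> V) (g : nat -> V) (M : nat -> R) (L : V) :
  (forall k, filterlim (fun n => f n k) eventually (locally (g k))) ->
  eventually (fun n => forall k, norm (f n k) <= M k) -> ex_series M -> is_series g L ->
  filterlim (fun n => sum_n (f n) n) eventually (locally L).
Proof.
  intros Hf HM HexM HL.
  pose proof (norm_limit_le f g M Hf HM) as Hg.
  assert (Hnull : filterlim (fun n => sum_n (fun k => minus (f n k) (g k)) n)
                    eventually (locally (zero : V))).
  { apply tannery_null with (fun k => M k + M k).
    - intros k. replace (zero : V) with (plus (g k) (opp (g k)))
        by exact (@plus_opp_r (NormedModule.AbelianGroup K V) (g k)).
      exact (filterlim_comp_2 _ _ _ (Hf k) (filterlim_const _) (filterlim_plus _ _)).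
    - apply (filter_imp _ _) with (2 := HM). intros n Hn k.
      eapply Rle_trans; [apply norm_triangle|]. rewrite norm_opp.
      apply Rplus_le_compat; [apply Hn|apply Hg].
    - exact (ex_series_plus M M HexM HexM). }
  rewrite <- (plus_zero_l L).
  apply filterlim_ext with (fun n => plus (sum_n (fun k => minus (f n k) (g k)) n) (sum_n g n)).
  - intros n. rewrite <- sum_n_plus. apply sum_n_ext. intros k.
    unfold minus. now rewrite <- plus_assoc, plus_opp_l, plus_zero_r.
  - exact (filterlim_comp_2 _ _ _ Hnull HL (filterlim_plus _ _)).
Qed.

End Tannery.

Lemma tannery {K : AbsRing} {V : CompleteNormedModule K}
  (f : nat -> nat -> V) (g : nat -> V) (M : nat -> R) :
  (forall k, filterlim (fun n => f n k) eventually (locally (g k))) ->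
  eventually (fun n => forall k, norm (f n k) <= M k) -> ex_series M ->
  exists L, is_series g L /\ filterlim (fun n => sum_n (f n) n) eventually (locally L).
Proof.
  intros Hf HM HexM.
  destruct (ex_series_le g M (norm_limit_le (V := V) f g M Hf HM) HexM) as [L HL].
  exists L. split; [exact HL|].
  exact (filterlim_sum_n_dominated (V := V) f g M L Hf HM HexM HL).
Qed.

(** * Complex sequences and finite products *)

Lemma filterlim_C_Cmod (u : nat -> C) (l : C) :
  filterlim u eventually (locally l) <-> is_lim_seq (fun n => Cmod (u n - l)) 0.
Proof.
  rewrite <- is_lim_seq_spec. split.
  - intros Hu eps.
    assert (Hsqrt2 : 0 < sqrt 2) by (apply sqrt_lt_R0; lra).
    assert (Heps : 0 < eps / sqrt 2) by (apply Rdiv_lt_0_compat; [apply cond_pos | exact Hsqrt2]).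
    apply (filter_imp (fun n => ball l (mkposreal _ Heps) (u n))).
    + intros n Hn. apply C_NormedModule_mixin_compat2 in Hn. simpl in Hn.
      rewrite Rminus_0_r, Rabs_pos_eq by apply Cmod_ge_0.
      replace (pos eps) with (sqrt 2 * (eps / sqrt 2)) by (field; lra). exact Hn.
    + exact (proj1 (filterlim_locally u l) Hu _).
  - intros Hu. apply filterlim_locally. intros eps.
    apply (filter_imp _ _) with (2 := Hu eps). intros n Hn.
    apply C_NormedModule_mixin_compat1.
    rewrite Rminus_0_r, Rabs_pos_eq in Hn by apply Cmod_ge_0. exact Hn.
Qed.

Lemma filterlim_RtoC (u : nat -> R) (l : R) :
  is_lim_seq u l -> filterlim (fun n => RtoC (u n)) eventually (locally (RtoC l)).
Proof.
  intros Hu. apply filterlim_locally. intros eps.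
  apply (filter_imp (fun n => ball l eps (u n))).
  - intros n Hn. split; [exact Hn | apply ball_center].
  - exact (proj1 (filterlim_locally u l) Hu eps).
Qed.

Lemma filterlim_Cminus (u v : nat -> C) (l m : C) :
  filterlim u eventually (locally l) -> filterlim v eventually (locally m) ->
  filterlim (fun n => u n - v n)%C eventually (locally (l - m)%C).
Proof.
  intros Hu Hv.
  exact (filterlim_comp_2 _ _ _ Hu (@filterlim_comp _ _ _ _ _ _ _ _ Hv (filterlim_opp m))
           (filterlim_plus (V := C_NormedModule) l (opp m))).
Qed.

Lemma filterlim_Cmult (u v : nat -> C) (l m : C) :
  filterlim u eventually (locally l) -> filterlim v eventually (locally m) ->
  filterlim (fun n => u n * v n)%C eventually (locally (l * m)%C).
Proof.
  rewrite !filterlim_C_Cmod. intros Hu Hv.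
  apply is_lim_seq_le_le with (fun _ => 0)
    (fun n => Cmod (u n - l) * Cmod (v n - m) + Cmod l * Cmod (v n - m) + Cmod m * Cmod (u n - l)).
  - intros n. split; [apply Cmod_ge_0|].
    replace (u n * v n - l * m)%C
      with ((u n - l) * (v n - m) + l * (v n - m) + m * (u n - l))%C by ring.
    rewrite <- !Cmod_mult.
    eapply Rle_trans; [apply Cmod_triangle|]. apply Rplus_le_compat_r, Cmod_triangle.
  - apply is_lim_seq_const.
  - replace (Finite 0) with (Finite (0 * 0 + Cmod l * 0 + Cmod m * 0)) by (f_equal; ring).
    apply is_lim_seq_plus'; [apply is_lim_seq_plus'|].
    + now apply is_lim_seq_mult'.
    + apply is_lim_seq_mult'; [apply is_lim_seq_const | exact Hv].
    + apply is_lim_seq_mult'; [apply is_lim_seq_const | exact Hu].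
Qed.

Lemma filterlim_Cinv (u : nat -> C) (l : C) :
  l <> 0 -> filterlim u eventually (locally l) ->
  filterlim (fun n => / u n)%C eventually (locally (/ l)%C).
Proof.
  intros Hl Hu. apply Cmod_gt_0 in Hl as Hl'.
  apply filterlim_C_Cmod in Hu. apply filterlim_C_Cmod.
  apply is_lim_seq_le_le_loc with (fun _ => 0) (fun n => 2 / (Cmod l * Cmod l) * Cmod (u n - l)).
  - assert (Hhalf : 0 < Cmod l / 2) by lra.
    apply (filter_imp _ _) with (2 := proj2 (is_lim_seq_spec _ _) Hu (mkposreal _ Hhalf)).
    intros n Hn. simpl in Hn. rewrite Rminus_0_r, Rabs_pos_eq in Hn by apply Cmod_ge_0.
    split; [apply Cmod_ge_0|].
    assert (Hun : Cmod l / 2 <= Cmod (u n)).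
    { assert (Htri : Cmod l <= Cmod (u n) + Cmod (l - u n)).
      { replace l with (u n + (l - u n))%C at 1 by ring. apply Cmod_triangle. }
      rewrite <- (Cmod_opp (l - u n)) in Htri.
      replace (- (l - u n))%C with (u n - l)%C in Htri by ring. lra. }
    assert (Hun0 : u n <> 0) by (apply Cmod_gt_0; lra).
    replace (/ u n - / l)%C with ((- (u n - l)) * / (u n * l))%C by (field; split; assumption).
    rewrite Cmod_mult, Cmod_opp, Cmod_inv, Cmod_mult by (apply Cmult_neq_0; assumption).
    rewrite Rmult_comm. apply Rmult_le_compat_r; [apply Cmod_ge_0|].
    replace (2 / (Cmod l * Cmod l)) with (/ (Cmod l / 2 * Cmod l)) by (field; lra).
    apply Rinv_le_contravar; [nra | apply Rmult_le_compat_r; lra].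
  - apply is_lim_seq_const.
  - replace (Finite 0) with (Finite (2 / (Cmod l * Cmod l) * 0)) by (f_equal; ring).
    apply is_lim_seq_mult'; [apply is_lim_seq_const | exact Hu].
Qed.

Lemma filterlim_cprod (u : nat -> nat -> C) (l : nat -> C) (m : nat) :
  (forall i, (i < m)%nat -> filterlim (fun n => u n i) eventually (locally (l i))) ->
  filterlim (fun n => cprod (u n) m) eventually (locally (cprod l m)).
Proof.
  induction m as [|m IH]; intros Hu; simpl.
  - apply filterlim_const.
  - apply filterlim_Cmult; [apply IH; intros i Hi | ]; apply Hu; lia.
Qed.

Lemma cprod_1 (m : nat) : cprod (fun _ => RtoC 1) m = 1.
Proof. induction m as [|m IH]; simpl; [reflexivity | rewrite IH; ring]. Qed.

Lemma eventually_forall_lt (P : nat -> nat -> Prop) (m : nat) :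
  (forall i, (i < m)%nat -> eventually (P i)) ->
  eventually (fun n => forall i, (i < m)%nat -> P i n).
Proof.
  induction m as [|m IH]; intros HP.
  - exists O. intros n _ i Hi. lia.
  - apply (filter_imp (fun n => (forall i, (i < m)%nat -> P i n) /\ P m n)).
    + intros n [Hlt Hm] i Hi.
      destruct (Nat.eq_dec i m) as [->|Hne]; [exact Hm | apply Hlt; lia].
    + apply filter_and; [apply IH; intros i Hi|]; apply HP; lia.
Qed.

Lemma eventually_Cmod_le (u : nat -> C) (e : R) :
  0 < e -> filterlim u eventually (locally (RtoC 0)) -> eventually (fun n => Cmod (u n) <= e).
Proof.
  intros He Hu. apply filterlim_C_Cmod, is_lim_seq_spec in Hu.
  apply (filter_imp _ _) with (2 := Hu (mkposreal e He)). simpl. intros n Hn.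
  rewrite Rminus_0_r, Rabs_pos_eq in Hn by apply Cmod_ge_0.
  replace (u n - 0)%C with (u n) in Hn by ring. lra.
Qed.

Lemma Cinv_0 : (/ 0)%C = 0.
Proof. unfold Cinv, RtoC. simpl. f_equal; unfold Rdiv; ring. Qed.

Lemma Cinv_mult_total (x y : C) : (/ (x * y) = / x * / y)%C.
Proof.
  destruct (Ceq_dec x 0) as [->|Hx]; [|destruct (Ceq_dec y 0) as [->|Hy]].
  - rewrite Cmult_0_l, Cinv_0. ring.
  - rewrite Cmult_0_r, Cinv_0. ring.
  - field. split; assumption.
Qed.

Lemma Cmod_inv_total (x : C) : Cmod (/ x) = / Cmod x.
Proof.
  destruct (Ceq_dec x 0) as [->|Hx]; [|apply Cmod_inv, Hx].
  now rewrite Cinv_0, Cmod_0, Rinv_0.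
Qed.

Lemma Cmod_cprod_le (f : nat -> C) (B : R) (m : nat) :
  (forall i, (i < m)%nat -> Cmod (f i) <= B) -> Cmod (cprod f m) <= B ^ m.
Proof.
  induction m as [|m IH]; intros Hf; simpl.
  - rewrite Cmod_1. lra.
  - rewrite Cmod_mult, Rmult_comm.
    apply Rmult_le_compat; try apply Cmod_ge_0; [apply Hf | apply IH; intros i Hi; apply Hf]; lia.
Qed.

Lemma Cmod_cprod_ge (f : nat -> C) (b : R) (m : nat) :
  0 <= b -> (forall i, (i < m)%nat -> b <= Cmod (f i)) -> b ^ m <= Cmod (cprod f m).
Proof.
  intros Hb. induction m as [|m IH]; intros Hf; simpl.
  - rewrite Cmod_1. lra.
  - rewrite Cmod_mult, Rmult_comm.
    apply Rmult_le_compat; [apply pow_le, Hb | exact Hb | apply IH; intros i Hi | ]; apply Hf; lia.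
Qed.

Lemma cprod_shift (f : nat -> C) (m : nat) :
  cprod f (S m) = (f O * cprod (fun i => f (S i)) m)%C.
Proof.
  induction m as [|m IH]; [simpl; ring|].
  change (cprod f (S (S m))) with (cprod f (S m) * f (S m))%C.
  rewrite IH. simpl. ring.
Qed.

Lemma cpow_mult (x y : C) (k : nat) : cpow (x * y) k = (cpow x k * cpow y k)%C.
Proof. induction k as [|k IH]; simpl; [ring | rewrite IH; ring]. Qed.

Lemma Cmod_cpow (x : C) (k : nat) : Cmod (cpow x k) = Cmod x ^ k.
Proof. induction k as [|k IH]; simpl; [apply Cmod_1 | rewrite Cmod_mult, IH; ring]. Qed.

Lemma csum_sum_n (f : nat -> C) (N : nat) : csum f N = sum_n f N.
Proof.
  induction N as [|N IH]; simpl; [now rewrite sum_O | now rewrite sum_Sn, IH].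
Qed.

(** * q-Pochhammer symbols *)

Lemma exp_le_compat (x y : R) : x <= y -> exp x <= exp y.
Proof. intros [Hlt|<-]; [left; apply exp_increasing, Hlt | apply Rle_refl]. Qed.

Lemma Rinv_nonneg (x : R) : 0 <= x -> 0 <= / x.
Proof. intros [Hx|<-]; [left; apply Rinv_0_lt_compat, Hx | rewrite Rinv_0; apply Rle_refl]. Qed.

Lemma pow_le_1 (x : R) (n : nat) : 0 <= x <= 1 -> x ^ n <= 1.
Proof. intros Hx. rewrite <- (pow1 n). now apply pow_incr. Qed.

Lemma inv_exp_le (t : R) : 0 <= t <= 1 -> / exp t <= 1 - t / 2.
Proof.
  intros Ht. apply Rle_trans with (/ (1 + t)).
  - apply Rinv_le_contravar; [lra | apply exp_ineq1_le].
  - apply Rmult_le_reg_r with (1 + t); [lra|]. rewrite Rinv_l by lra. nra.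
Qed.

Lemma geometric_partial_succ (q : R) (k : nat) : 0 < q < 1 ->
  (1 - q ^ S k) / (1 - q) = (1 - q ^ k) / (1 - q) + q ^ k.
Proof. intros Hq. simpl. field. lra. Qed.

Lemma geometric_partial_le (q : R) (k : nat) : 0 < q < 1 ->
  (1 - q ^ k) / (1 - q) <= / (1 - q).
Proof.
  intros Hq. unfold Rdiv. rewrite <- (Rmult_1_l (/ (1 - q))) at 2.
  apply Rmult_le_compat_r; [left; apply Rinv_0_lt_compat; lra|].
  assert (0 <= q ^ k) by (apply pow_le; lra). lra.
Qed.

Lemma Cmod_scale_pow (x : C) (q : R) (k : nat) : 0 < q ->
  Cmod (x * RtoC (q ^ k)) = Cmod x * q ^ k.
Proof. intros Hq. rewrite Cmod_mult, Cmod_R, Rabs_pos_eq; [reflexivity | apply pow_le; lra]. Qed.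

Lemma Cmod_qpoch_le (q : R) (x : C) (k : nat) : 0 < q < 1 -> Cmod x <= 1 ->
  Cmod (qpoch q x k) <= exp (/ (1 - q)).
Proof.
  intros Hq Hx.
  assert (Hpartial : forall k, Cmod (qpoch q x k) <= exp ((1 - q ^ k) / (1 - q))).
  { clear k. induction k as [|k IH]; simpl qpoch.
    - rewrite Cmod_1, pow_O. replace ((1 - 1) / (1 - q)) with 0 by (field; lra).
      rewrite exp_0. apply Rle_refl.
    - rewrite Cmod_mult, geometric_partial_succ, exp_plus by exact Hq.
      apply Rmult_le_compat; [apply Cmod_ge_0 | apply Cmod_ge_0 | exact IH |].
      assert (Hqk : 0 <= q ^ k) by (apply pow_le; lra).
      eapply Rle_trans; [apply Cmod_triangle|].
      rewrite Cmod_1, Cmod_opp, Cmod_scale_pow by lra.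
      eapply Rle_trans; [|apply exp_ineq1_le]. nra. }
  eapply Rle_trans; [apply Hpartial | apply exp_le_compat, geometric_partial_le, Hq].
Qed.

Lemma Cmod_qpoch_ge (q : R) (x : C) (k : nat) : 0 < q < 1 -> Cmod x <= / 2 ->
  / exp (/ (1 - q)) <= Cmod (qpoch q x k).
Proof.
  intros Hq Hx.
  assert (Hpartial : forall k, / exp ((1 - q ^ k) / (1 - q)) <= Cmod (qpoch q x k)).
  { clear k. induction k as [|k IH]; simpl qpoch.
    - rewrite Cmod_1, pow_O. replace ((1 - 1) / (1 - q)) with 0 by (field; lra).
      rewrite exp_0, Rinv_1. apply Rle_refl.
    - rewrite Cmod_mult, geometric_partial_succ, exp_plus, Rinv_mult by exact Hq.
      assert (Hqk : 0 < q ^ k <= 1) by (split; [apply pow_lt | apply pow_le_1]; lra).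
      assert (Hexp : forall t, 0 <= / exp t) by (intros t; apply Rinv_nonneg, Rlt_le, exp_pos).
      apply Rmult_le_compat; [apply Hexp | apply Hexp | exact IH |].
      eapply Rle_trans; [apply inv_exp_le; lra|].
      assert (Htri : Cmod 1 <= Cmod (1 - x * RtoC (q ^ k)) + Cmod (x * RtoC (q ^ k))).
      { replace (RtoC 1) with ((1 - x * RtoC (q ^ k)) + x * RtoC (q ^ k))%C at 1 by ring.
        apply Cmod_triangle. }
      rewrite Cmod_1, Cmod_scale_pow in Htri by lra.
      assert (Cmod x * q ^ k <= / 2 * q ^ k) by (apply Rmult_le_compat_r; lra). lra. }
  eapply Rle_trans; [|apply Hpartial].
  apply Rinv_le_contravar; [apply exp_pos | apply exp_le_compat, geometric_partial_le, Hq].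
Qed.

Lemma qpoch_succ_l (q : R) (x : C) (k : nat) :
  qpoch q x (S k) = ((1 - x) * qpoch q (x * RtoC q) k)%C.
Proof.
  induction k as [|k IH].
  - simpl. ring.
  - change (qpoch q x (S (S k))) with (qpoch q x (S k) * (1 - x * RtoC (q ^ S k)))%C.
    rewrite IH. simpl. rewrite (RtoC_mult q (q ^ k)). ring.
Qed.

(* No hypothesis on [x]: a vanishing [(x;q)_k] contributes [/ 0 = 0]. *)
Lemma qpoch_inv_bounded (q : R) (x : C) : 0 < q < 1 ->
  exists B, forall k, / Cmod (qpoch q x k) <= B.
Proof.
  intros Hq.
  (* [(x;q)_(k+1) = (1 - x) (xq;q)_k]: peel off factors until [|x q^J| <= 1/2]. *)
  assert (Hshift : forall J x, Cmod x * q ^ J <= / 2 ->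
            exists B, forall k, / Cmod (qpoch q x k) <= B).
  { clear x. induction J as [|J IH]; intros x Hx.
    - exists (exp (/ (1 - q))). intros k. rewrite <- (Rinv_inv (exp _)).
      apply Rinv_le_contravar; [apply Rinv_0_lt_compat, exp_pos |].
      apply Cmod_qpoch_ge; [exact Hq | simpl in Hx; lra].
    - destruct (IH (x * RtoC q)%C) as [B HB].
      { rewrite Cmod_mult, Cmod_R, Rabs_pos_eq by lra. simpl in Hx. lra. }
      exists (Rmax 1 (/ Cmod (1 - x) * B)). intros [|k].
      + simpl. rewrite Cmod_1, Rinv_1. apply Rmax_l.
      + rewrite qpoch_succ_l, Cmod_mult, Rinv_mult.
        eapply Rle_trans; [|apply Rmax_r].
        apply Rmult_le_compat_l; [|apply HB].
        destruct (Cmod_ge_0 (1 - x)) as [Hpos|Hzero];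
          [left; apply Rinv_0_lt_compat, Hpos | rewrite <- Hzero, Rinv_0; lra]. }
  assert (Hx : 0 < / (2 * (Cmod x + 1))) by (apply Rinv_0_lt_compat; pose proof (Cmod_ge_0 x); lra).
  destruct (pow_lt_1_zero q ltac:(rewrite Rabs_pos_eq; lra) _ Hx) as [J HJ].
  apply (Hshift J). specialize (HJ J (le_n J)).
  rewrite Rabs_pos_eq in HJ by (apply pow_le; lra).
  assert (HqJ : 0 <= q ^ J) by (apply pow_le; lra).
  pose proof (Cmod_ge_0 x).
  apply Rmult_lt_compat_l with (r := 2 * (Cmod x + 1)) in HJ; [|lra].
  rewrite Rinv_r in HJ by lra. nra.
Qed.

Lemma filterlim_qpoch_0 (q : R) (x : nat -> C) (k : nat) :
  filterlim x eventually (locally (RtoC 0)) ->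
  filterlim (fun n => qpoch q (x n) k) eventually (locally (RtoC 1)).
Proof.
  intros Hx. induction k as [|k IH]; simpl.
  - apply filterlim_const.
  - pose proof (filterlim_Cmult _ _ _ _ IH
                  (filterlim_Cminus _ _ _ _ (filterlim_const (RtoC 1))
                     (filterlim_Cmult _ _ _ _ Hx (filterlim_const (RtoC (q ^ k)))))) as Hlim.
    replace (1 * (1 - 0 * RtoC (q ^ k)))%C with (RtoC 1) in Hlim by ring.
    exact Hlim.
Qed.

Lemma Cmod_qpow (q : R) (w : C) : Cmod (qpow q w) = exp (Re w * ln q).
Proof.
  unfold qpow, Cmod. simpl.
  set (e := exp (Re w * ln q)). set (t := Im w * ln q).
  replace (e * cos t * (e * cos t * 1) + e * sin t * (e * sin t * 1))
    with (e ^ 2 * ((sin t)² + (cos t)²)) by (unfold Rsqr; ring).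
  rewrite sin2_cos2, Rmult_1_r. apply sqrt_pow2. left; apply exp_pos.
Qed.

Lemma exp_INR_mult (n : nat) (x : R) : exp (INR n * x) = exp x ^ n.
Proof.
  induction n as [|n IH].
  - simpl. now rewrite Rmult_0_l, exp_0.
  - rewrite S_INR, Rmult_plus_distr_r, Rmult_1_l, exp_plus, IH. simpl. ring.
Qed.

Lemma qpow_opp_INR (q : R) (n : nat) : 0 < q -> qpow q (RtoC (- INR n)) = RtoC (/ q ^ n).
Proof.
  intros Hq. unfold qpow, RtoC. simpl.
  rewrite !Rmult_0_l, cos_0, sin_0, Rmult_0_r, Rmult_1_r. f_equal.
  rewrite Ropp_mult_distr_l_reverse, exp_Ropp, exp_INR_mult, exp_ln by exact Hq.
  reflexivity.
Qed.

Definition qlin (q a : R) (b : C) (n : nat) : C := qpow q (RtoC (a * INR n) + b).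

Lemma filterlim_qlin_0 (q a : R) (b : C) : 0 < q < 1 -> 0 < a ->
  filterlim (qlin q a b) eventually (locally (RtoC 0)).
Proof.
  intros Hq Ha. apply filterlim_C_Cmod.
  apply is_lim_seq_ext with (fun n => exp (Re b * ln q) * exp (a * ln q) ^ n).
  - intros n. unfold qlin. replace (qpow q (RtoC (a * INR n) + b) - 0)%C
      with (qpow q (RtoC (a * INR n) + b)) by ring.
    rewrite Cmod_qpow, <- exp_INR_mult, <- exp_plus. f_equal. unfold Re. simpl. ring.
  - replace (Finite 0) with (Finite (exp (Re b * ln q) * 0)) by (f_equal; ring).
    apply is_lim_seq_mult'; [apply is_lim_seq_const | apply is_lim_seq_geom].
    assert (ln q < 0) by (rewrite <- ln_1; apply ln_increasing; lra).
    rewrite Rabs_pos_eq by (left; apply exp_pos).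
    rewrite <- exp_0. apply exp_increasing. nra.
Qed.

Lemma eventually_qlin_small (q : R) (e : nat -> R) (f : nat -> C) (m : nat) : 0 < q < 1 ->
  (forall i, (i < m)%nat -> 0 < e i) ->
  eventually (fun n => forall i, (i < m)%nat -> Cmod (qlin q (e i) (f i) n) <= / 2).
Proof.
  intros Hq He. apply eventually_forall_lt. intros i Hi.
  apply eventually_Cmod_le; [lra|]. apply filterlim_qlin_0; [exact Hq | apply He, Hi].
Qed.

Lemma filterlim_cprod_qpoch_qlin (q : R) (e : nat -> R) (f : nat -> C) (m k : nat) :
  0 < q < 1 -> (forall i, (i < m)%nat -> 0 < e i) ->
  filterlim (fun n => cprod (fun i => qpoch q (qlin q (e i) (f i) n) k) m)
    eventually (locally (RtoC 1)).
Proof.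
  intros Hq He. rewrite <- (cprod_1 m). apply filterlim_cprod. intros i Hi.
  apply filterlim_qpoch_0, filterlim_qlin_0; [exact Hq | apply He, Hi].
Qed.

Fixpoint qfall (q : R) (n k : nat) : R :=
  match k with
  | O => 1
  | S k => qfall q n k * (q ^ n - q ^ k)
  end.

Lemma qpoch_qfall (q : R) (n k : nat) : 0 < q ->
  (qpoch q (RtoC (/ q ^ n)) k * cpow (RtoC (q ^ n)) k)%C = RtoC (qfall q n k).
Proof.
  intros Hq. assert (Hqn : q ^ n <> 0) by (apply pow_nonzero; lra).
  induction k as [|k IH]; simpl.
  - ring.
  - replace (RtoC (qfall q n k * (q ^ n - q ^ k)))
      with (RtoC (qfall q n k) * ((1 - RtoC (/ q ^ n) * RtoC (q ^ k)) * RtoC (q ^ n)))%C.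
    + rewrite <- IH. ring.
    + rewrite <- !RtoC_mult, <- RtoC_minus, <- !RtoC_mult. f_equal. field. exact Hqn.
Qed.

Lemma qfall_vanishes (q : R) (n k : nat) : (n < k)%nat -> qfall q n k = 0.
Proof.
  induction k as [|k IH]; intros Hnk; [lia|]. simpl.
  destruct (Nat.eq_dec n k) as [->|Hne]; [ring | rewrite IH by lia; ring].
Qed.

Lemma binom2_S (k : nat) : binom2 (S k) = (binom2 k + k)%nat.
Proof.
  unfold binom2. replace (S k * (S k - 1))%nat with (k * (k - 1) + k * 2)%nat.
  - now rewrite Nat.div_add by lia.
  - destruct k; simpl; lia.
Qed.

Lemma Rabs_qfall_le (q : R) (n k : nat) : 0 < q < 1 -> Rabs (qfall q n k) <= q ^ binom2 k.
Proof.
  intros Hq. destruct (Nat.le_gt_cases k n) as [Hkn|Hnk].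
  2: { rewrite qfall_vanishes, Rabs_R0 by lia. apply pow_le. lra. }
  induction k as [|k IH].
  - simpl. rewrite Rabs_R1. apply Rle_refl.
  - simpl. rewrite Rabs_mult, binom2_S, pow_add.
    assert (Hmono : q ^ n <= q ^ k).
    { replace n with (k + (n - k))%nat by lia. rewrite pow_add.
      rewrite <- (Rmult_1_r (q ^ k)) at 2.
      apply Rmult_le_compat_l; [apply pow_le | apply pow_le_1]; lra. }
    assert (0 < q ^ n) by (apply pow_lt; lra).
    rewrite (Rabs_left1 (q ^ n - q ^ k)) by lra.
    apply Rmult_le_compat; [apply Rabs_pos | lra | apply IH; lia | lra].
Qed.

Lemma qfall_lim (q : R) (k : nat) : 0 < q < 1 ->
  is_lim_seq (fun n => qfall q n k) ((-1) ^ k * q ^ binom2 k).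
Proof.
  intros Hq. induction k as [|k IH]; simpl qfall.
  - replace (Finite ((-1) ^ 0 * q ^ binom2 0)) with (Finite 1) by (f_equal; simpl; ring).
    apply is_lim_seq_const.
  - replace (Finite ((-1) ^ S k * q ^ binom2 (S k)))
      with (Finite ((-1) ^ k * q ^ binom2 k * (0 - q ^ k)))
      by (f_equal; rewrite binom2_S, pow_add; simpl; ring).
    apply is_lim_seq_mult'; [exact IH|].
    apply is_lim_seq_minus'; [|apply is_lim_seq_const].
    apply is_lim_seq_geom. rewrite Rabs_pos_eq; lra.
Qed.

Lemma ex_series_qbinom_geom (q rho : R) : 0 < q < 1 -> 0 < rho ->
  ex_series (fun k => q ^ binom2 k * rho ^ k).
Proof.
  intros Hq Hrho.
  assert (Hpos : forall k, 0 < q ^ binom2 k * rho ^ k)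
    by (intros k; apply Rmult_lt_0_compat; apply pow_lt; lra).
  apply ex_series_ext with (fun k => Rabs (q ^ binom2 k * rho ^ k)).
  { intros k. apply Rabs_pos_eq, Rlt_le, Hpos. }
  apply ex_series_DAlembert with 0; [lra | intros k; apply Rgt_not_eq, Hpos |].
  apply is_lim_seq_ext with (fun k => q ^ k * rho).
  - intros k. rewrite Rabs_pos_eq.
    + rewrite binom2_S, pow_add. simpl. field.
      split; apply Rgt_not_eq, pow_lt; lra.
    + apply Rlt_le, Rdiv_lt_0_compat; apply Hpos.
  - replace (Finite 0) with (Finite (0 * rho)) by (f_equal; ring).
    apply is_lim_seq_mult'; [|apply is_lim_seq_const].
    apply is_lim_seq_geom. rewrite Rabs_pos_eq; lra.
Qed.

(** * The terms of the series *)

Lemma powerRZ_neg1_sq (m : Z) : powerRZ (-1) m * powerRZ (-1) m = 1.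
Proof. rewrite <- powerRZ_mult. replace (-1 * -1) with 1 by ring. apply powerRZ_R1. Qed.

Definition num_params (q : R) (a : nat -> R) (b : nat -> C) (n i : nat) : C :=
  match i with
  | O => qpow q (RtoC (- INR n))
  | S j => qlin q (a j) (b j) n
  end.

Definition den_params (q alpha : R) (c : nat -> R) (d : nat -> C) (n i : nat) : C :=
  match i with
  | O => qpow q (RtoC alpha)
  | S l => qlin q (c l) (d l) n
  end.

Definition common_factor (q : R) (r s : nat) (alpha : R) (z : C) (k : nat) : C :=
  (RtoC (powerRZ (-1) ((1 + Z.of_nat s - Z.of_nat r) * Z.of_nat k)
         * powerRZ q ((1 + Z.of_nat s - Z.of_nat r) * Z.of_nat (binom2 k)))
   * cpow z k / (qpoch q (qpow q (RtoC alpha)) k * qpoch q (RtoC q) k))%C.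

Lemma phi_term_factor (q : R) (r s : nat) (alpha : R) (a : nat -> R) (b : nat -> C)
  (c : nat -> R) (d : nat -> C) (z : C) (n k : nat) :
  0 < q -> (1 <= r)%nat -> (1 <= s)%nat ->
  phi_term q r s (num_params q a b n) (den_params q alpha c d n) (RtoC (q ^ n) * z) k =
  (RtoC (qfall q n k) * cprod (fun j => qpoch q (qlin q (a j) (b j) n) k) (r - 1)
   / cprod (fun l => qpoch q (qlin q (c l) (d l) n) k) (s - 1)
   * common_factor q r s alpha z k)%C.
Proof.
  intros Hq Hr Hs. unfold phi_term, common_factor.
  destruct r as [|r]; [lia|]. destruct s as [|s]; [lia|].
  rewrite !Nat.sub_succ, !Nat.sub_0_r, !cprod_shift. cbn [num_params den_params].
  rewrite qpow_opp_INR, cpow_mult, <- (qpoch_qfall q n k) by exact Hq.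
  unfold Cdiv. rewrite !Cinv_mult_total. ring.
Qed.

Lemma limit_term_factor (q : R) (r s : nat) (alpha : R) (z : C) (k : nat) : 0 < q ->
  limit_term q r s alpha z k = (RtoC ((-1) ^ k * q ^ binom2 k) * common_factor q r s alpha z k)%C.
Proof.
  intros Hq. unfold limit_term, common_factor.
  set (e := (1 + Z.of_nat s - Z.of_nat r)%Z).
  (* [(r - s) k = k + e k - 2 e k], and the sign [(-1)^(-2 e k)] is 1. *)
  replace ((Z.of_nat r - Z.of_nat s) * Z.of_nat k)%Z
    with (Z.of_nat k + e * Z.of_nat k + (- (e * Z.of_nat k) + - (e * Z.of_nat k)))%Z
    by (unfold e; ring).
  replace ((2 + Z.of_nat s - Z.of_nat r) * Z.of_nat (binom2 k))%Z
    with (Z.of_nat (binom2 k) + e * Z.of_nat (binom2 k))%Z by (unfold e; ring).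
  rewrite !powerRZ_add by lra. rewrite (powerRZ_neg1_sq (- (e * Z.of_nat k))).
  rewrite <- !pow_powerRZ. unfold Cdiv. rewrite !RtoC_mult. ring.
Qed.

Lemma Cmod_common_factor_le (q : R) (r s : nat) (alpha : R) (z : C) (k : nat) (Ba Bq : R) :
  0 < q < 1 -> (r <= S s)%nat ->
  (forall k, / Cmod (qpoch q (qpow q (RtoC alpha)) k) <= Ba) ->
  (forall k, / Cmod (qpoch q (RtoC q) k) <= Bq) ->
  Cmod (common_factor q r s alpha z k) <= Ba * Bq * (Cmod z + 1) ^ k.
Proof.
  intros Hq Hrs HBa HBq. unfold common_factor, Cdiv.
  replace (1 + Z.of_nat s - Z.of_nat r)%Z with (Z.of_nat (1 + s - r)) by lia.
  rewrite <- !Znat.Nat2Z.inj_mul, <- !pow_powerRZ.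
  rewrite !Cmod_mult, Cmod_inv_total, Cmod_mult, Rinv_mult, Cmod_R, Rabs_mult,
    pow_1_abs, Rmult_1_l, Cmod_cpow, Rabs_pos_eq by (apply pow_le; lra).
  assert (Hpow : q ^ ((1 + s - r) * binom2 k) <= 1) by (apply pow_le_1; lra).
  assert (Hz : Cmod z ^ k <= (Cmod z + 1) ^ k)
    by (apply pow_incr; pose proof (Cmod_ge_0 z); lra).
  replace (Ba * Bq * (Cmod z + 1) ^ k) with (1 * (Cmod z + 1) ^ k * (Ba * Bq)) by ring.
  apply Rmult_le_compat;
    [apply Rmult_le_pos; apply pow_le; [lra | apply Cmod_ge_0]
    | apply Rmult_le_pos; apply Rinv_nonneg, Cmod_ge_0
    | apply Rmult_le_compat; [apply pow_le; lra | apply pow_le, Cmod_ge_0 | exact Hpow | exact Hz]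
    | apply Rmult_le_compat;
        [apply Rinv_nonneg, Cmod_ge_0 | apply Rinv_nonneg, Cmod_ge_0 | apply HBa | apply HBq]].
Qed.

Section Terms.

Variables (q : R) (r s : nat) (alpha : R) (a : nat -> R) (b : nat -> C)
  (c : nat -> R) (d : nat -> C) (z : C).
Hypotheses (Hq : 0 < q < 1) (Hr : (1 <= r)%nat) (Hs : (1 <= s)%nat)
  (Ha : forall j, (j < r - 1)%nat -> 0 < a j) (Hc : forall l, (l < s - 1)%nat -> 0 < c l).

Let term (n k : nat) : C :=
  phi_term q r s (num_params q a b n) (den_params q alpha c d n) (RtoC (q ^ n) * z) k.

Lemma filterlim_phi_term (k : nat) :
  filterlim (fun n => term n k) eventually (locally (limit_term q r s alpha z k)).
Proof.
  pose proof (filterlim_Cmult _ _ _ _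
    (filterlim_Cmult _ _ _ _
       (filterlim_Cmult _ _ _ _ (filterlim_RtoC _ _ (qfall_lim q k Hq))
          (filterlim_cprod_qpoch_qlin q a b (r - 1) k Hq Ha))
       (filterlim_Cinv _ _ C1_nz (filterlim_cprod_qpoch_qlin q c d (s - 1) k Hq Hc)))
    (filterlim_const (common_factor q r s alpha z k))) as Hlim.
  rewrite limit_term_factor by lra.
  replace (RtoC ((-1) ^ k * q ^ binom2 k) * 1 * / 1 * common_factor q r s alpha z k)%C
    with (RtoC ((-1) ^ k * q ^ binom2 k) * common_factor q r s alpha z k)%C in Hlim
    by (field; apply C1_nz).
  eapply filterlim_ext; [|exact Hlim]. intros n.
  symmetry. apply phi_term_factor; [lra | exact Hr | exact Hs].
Qed.

Lemma Cmod_phi_term_le (Ba Bq : R) (n k : nat) : (r - 1 <= s)%nat ->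
  (forall k, / Cmod (qpoch q (qpow q (RtoC alpha)) k) <= Ba) ->
  (forall k, / Cmod (qpoch q (RtoC q) k) <= Bq) ->
  (forall j, (j < r - 1)%nat -> Cmod (qlin q (a j) (b j) n) <= / 2) ->
  (forall l, (l < s - 1)%nat -> Cmod (qlin q (c l) (d l) n) <= / 2) ->
  Cmod (term n k) <= exp (/ (1 - q)) ^ (r - 1) * exp (/ (1 - q)) ^ (s - 1) * (Ba * Bq)
                     * (q ^ binom2 k * (Cmod z + 1) ^ k).
Proof.
  intros Hrs HBa HBq Hnum Hden. set (E := exp (/ (1 - q))). assert (HE : 0 < E) by apply exp_pos.
  unfold term. rewrite phi_term_factor by (lra || assumption).
  unfold Cdiv. rewrite !Cmod_mult, Cmod_inv_total, Cmod_R.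
  assert (Hfall := Rabs_qfall_le q n k Hq).
  assert (Hnum' : Cmod (cprod (fun j => qpoch q (qlin q (a j) (b j) n) k) (r - 1)) <= E ^ (r - 1)).
  { apply Cmod_cprod_le. intros i Hi. apply Cmod_qpoch_le; [exact Hq|].
    specialize (Hnum i Hi). lra. }
  assert (Hden' : / Cmod (cprod (fun l => qpoch q (qlin q (c l) (d l) n) k) (s - 1))
                  <= E ^ (s - 1)).
  { rewrite <- (Rinv_inv (E ^ (s - 1))), <- pow_inv.
    apply Rinv_le_contravar; [apply pow_lt, Rinv_0_lt_compat, HE|].
    apply Cmod_cprod_ge; [left; apply Rinv_0_lt_compat, HE|].
    intros i Hi. apply Cmod_qpoch_ge; [exact Hq | apply Hden, Hi]. }
  assert (Hcommon := Cmod_common_factor_le q r s alpha z k Ba Bq Hq ltac:(lia) HBa HBq).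
  replace (E ^ (r - 1) * E ^ (s - 1) * (Ba * Bq) * (q ^ binom2 k * (Cmod z + 1) ^ k))
    with (q ^ binom2 k * E ^ (r - 1) * E ^ (s - 1) * (Ba * Bq * (Cmod z + 1) ^ k)) by ring.
  repeat apply Rmult_le_compat; try assumption;
    repeat apply Rmult_le_pos; auto using Rabs_pos, Cmod_ge_0, Rinv_nonneg.
Qed.

Lemma phi_term_dominated : (r - 1 <= s)%nat ->
  exists M, ex_series M /\ eventually (fun n => forall k, Cmod (term n k) <= M k).
Proof.
  intros Hrs.
  destruct (qpoch_inv_bounded q (qpow q (RtoC alpha)) Hq) as [Ba HBa].
  destruct (qpoch_inv_bounded q (RtoC q) Hq) as [Bq HBq].
  set (E := exp (/ (1 - q))).
  exists (fun k => E ^ (r - 1) * E ^ (s - 1) * (Ba * Bq) * (q ^ binom2 k * (Cmod z + 1) ^ k)).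
  split.
  - apply (ex_series_scal_l (V := R_NormedModule)), ex_series_qbinom_geom; [exact Hq|].
    pose proof (Cmod_ge_0 z). lra.
  - apply (filter_imp _ _) with (2 := filter_and _ _ (eventually_qlin_small q a b (r - 1) Hq Ha)
                                                  (eventually_qlin_small q c d (s - 1) Hq Hc)).
    intros n [Hnum Hden] k. exact (Cmod_phi_term_le Ba Bq n k Hrs HBa HBq Hnum Hden).
Qed.

End Terms.

Theorem proposition6 (q : R) (r s : nat) (alpha : R)
  (a : nat -> R) (b : nat -> C) (c : nat -> R) (d : nat -> C) (z : C) :
  0 < q < 1 ->
  (1 <= r)%nat -> (1 <= s)%nat -> (r - 1 <= s)%nat ->
  ~ Zm_ alpha ->
  (forall j, (j < r - 1)%nat -> 0 < a j) ->
  (forall l, (l < s - 1)%nat -> 0 < c l) ->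
  (forall j, (j < r - 1)%nat -> forall n : nat, (1 <= n)%nat ->
       ~ Zm_ (a j * INR n + Re (b j))) ->
  (forall l, (l < s - 1)%nat -> forall n : nat, (1 <= n)%nat ->
       ~ Zm_ (c l * INR n + Re (d l))) ->
  exists L : C,
  is_series (limit_term q r s alpha z) L /\
  filterlim
    (fun n : nat =>
       phi_terminating q r s
         (fun i => match i with
                   | O => qpow q (RtoC (- INR n))
                   | S j => qpow q (Cplus (RtoC (a j * INR n)) (b j))
                   end)
         (fun i => match i with
                   | O => qpow q (RtoC alpha)
                   | S l => qpow q (Cplus (RtoC (c l * INR n)) (d l))
                   end)
         (Cmult (RtoC (q ^ n)) z) n)
    eventually
    (locally L).
Proof.
  (* The hypotheses excluding Z_- only keep denominators away from 0. *)
  intros Hq Hr Hs Hrs _ Ha Hc _ _.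
  destruct (phi_term_dominated q r s alpha a b c d z Hq Hr Hs Ha Hc Hrs) as [M [HM Hdom]].
  destruct (tannery (V := C_CompleteNormedModule) _ _ M
              (filterlim_phi_term q r s alpha a b c d z Hq Hr Hs Ha Hc) Hdom HM)
    as [L [HL Hlim]].
  exists L. split; [exact HL|].
  eapply filterlim_ext; [|exact Hlim]. intros n.
  unfold phi_terminating. now rewrite csum_sum_n.
Qed.
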